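(* If $G$ is a finite simple graph with no connected component of order less than $3$, then ${\chi^\Sigma_g}^\star(G)\leq \Delta(G)+\mathrm{col}(G)-1\leq 2\Delta(G)$.
   Context: For an Abelian group $\mathcal{G}$ with identity $0$ and $f\colon E(G)\to\mathcal{G}$, $w_f(v)=\sum_{u\in N(v)}f(uv)$. The nowhere-zero group sum chromatic number ${\chi^\Sigma_g}^\star(G)$ is the least positive integer $k$ such that for every Abelian group $\mathcal{G}$ of order $k$ there exists $f\colon E(G)\to\mathcal{G}\setminus\{0\}$ with $w_f(u)\neq w_f(v)$ for every edge $uv$. $\Delta(G)$ is the maximum degree; the coloring number $\mathrm{col}(G)$ is the least $k$ such that every subgraph of $G$ has minimum degree less than $k$. *)

(* A finite simple graph is a symmetric irreflexive
   relation e : rel T on a finType T. *)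
From HB Require Import structures.
From mathcomp Require Import all_boot all_order all_algebra.
Set Implicit Arguments. Unset Strict Implicit. Unset Printing Implicit Defensive.
Import Order.TTheory GRing.Theory Num.Theory.

Section Graphs.
Variable T : finType.
Variable e : rel T.

Definition edges : {set {set T}} := [set [set p.1; p.2] | p : T * T & e p.1 p.2].

Definition nbhd (v : T) : {set T} := [set u | e v u].
Definition deg (v : T) : nat := #|nbhd v|.

Definition max_deg : nat := \max_(v : T) deg v.

Definition wsum (M : zmodType) (f : {set T} -> M) (v : T) : M :=
  (\sum_(u in nbhd v) f [set v; u])%R.

Definition nz_gsum_ok (k : nat) : Prop :=
  forall M : finZmodType, #|[set: M]| = k ->
    exists f : {set T} -> M,
      (forall x, x \in edges -> f x != 0%R) /\
      (forall u v, e u v -> wsum f u != wsum f v).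

Definition is_nz_gsum_chi (k : nat) : Prop :=
  0 < k /\ nz_gsum_ok k /\ (forall j, 0 < j -> j < k -> ~ nz_gsum_ok j).

Definition col_ok (k : nat) : bool :=
  [forall S : {set T}, forall F : {set {set T}},
     [&& S != set0, F \subset edges & [forall x in F, x \subset S]] ==>
     [exists v in S, #|[set u | [set v; u] \in F]| < k]].

Lemma col_ok_exists : exists k, col_ok k.
Proof.
exists #|T|.+1; apply/forallP => S; apply/forallP => F; apply/implyP.
case/and3P => /set0Pn [v vS] _ _; apply/existsP; exists v.
by rewrite vS /= ltnS max_card.
Qed.

Definition col_num : nat := ex_minn col_ok_exists.

End Graphs.

(* The labelling is built greedily.  The vertex set is grown by steps adding
   either one vertex adjacent to the part already built or, when that part is
   a union of components, a root triple: a path p q r (possibly closed into a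
   triangle) of a new component with deg q + deg r <= Delta + col - 1, found
   next to a vertex of degree < col.  Edges are labelled in the reverse order.
   A vertex v added next to u gives its other new edges a fixed nonzero label
   and then chooses the label of vu: the neighbours of v labelled before forbid
   fewer than deg v values of its sum, so a group of order > Delta leaves a
   choice.  The labels of pq and qr in a root triple must together avoid at
   most deg q + deg r - 1 values, which is where the order Delta + col - 1 is
   needed. *)

From mathcomp Require Import all_boot all_order all_algebra zify.
From Stdlib Require Import Classical Wf_nat.
Set Implicit Arguments. Unset Strict Implicit. Unset Printing Implicit Defensive.
Import GRing.Theory.

Lemma ex_minimal_nat (P : nat -> Prop) n :
  P n -> exists2 m, P m & forall j, P j -> (m <= j)%N.
Proof.
move=> Pn; have [m [[Pm min_m] _]] :=
  dec_inh_nat_subset_has_unique_least_element P (fun j => classic (P j)) (ex_intro P n Pn).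
by exists m => // j /min_m /leP.
Qed.

Lemma setC_neq0 (I : finType) (S : {set I}) : S != setT -> ~: S != set0.
Proof. by apply: contraNneq => S0; rewrite -[S]setCK S0 setC0. Qed.

Lemma setT_by_growth (I : finType) (P : {set I} -> Prop) : P set0 ->
  (forall S, P S -> S != setT -> exists2 S', P S' & S \proper S') -> P setT.
Proof.
move=> P0 grow; suff grow_from n S : (#|~: S| <= n)%N -> P S -> P setT.
  exact: grow_from (leqnn _) P0.
elim: n S => [|n IH] S leS PS; case: (eqVneq S setT) => [<- // | neqS].
  by move: leS; rewrite leqn0 cards_eq0 (negbTE (setC_neq0 neqS)).
have [S' PS' ltS] := grow S PS neqS; apply: IH PS'.
by rewrite -ltnS (leq_trans _ leS) // proper_card // properC.
Qed.

Lemma leq_card_setU4 (I : finType) (A B C D : {set I}) :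
  (#|A :|: B :|: C :|: D| <= #|A| + #|B| + #|C| + #|D|)%N.
Proof.
apply: leq_trans (leq_card_setU _ _) _; rewrite leq_add2r.
by apply: leq_trans (leq_card_setU _ _) _; rewrite leq_add2r leq_card_setU.
Qed.

Lemma big_set3 (I : finType) (R : nmodType) (p q r : I) (G : I -> R) :
  p != q -> q != r -> p != r -> (\sum_(i in [set p; q; r]) G i = G p + G q + G r)%R.
Proof.
move=> npq nqr npr; rewrite setUC big_setU1 ?big_setU1 ?big_set1 ?inE 1?addrC //.
by rewrite negb_or ![r == _]eq_sym npr nqr.
Qed.

Lemma shift_neq (M : zmodType) (y s t : M) : (y != t - s -> y + s != t)%R.
Proof. by apply: contra => /eqP <-; rewrite addrK. Qed.

Lemma shift_notin (M : finZmodType) (Y : {set M}) (y s : M) :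
  y \notin [set (t - s)%R | t in Y] -> (y + s)%R \notin Y.
Proof. by apply: contra => ysY; apply/imsetP; exists (y + s)%R; rewrite ?addrK. Qed.

Section Graph.
Variables (T : finType) (e : rel T).
Hypotheses (e_sym : symmetric e) (e_irr : irreflexive e).
Implicit Types (A B W : {set T}).

Lemma mem_edges v u : ([set v; u] \in edges e) = e v u.
Proof.
apply/imsetP/idP => [[[x y]] /= | evu]; last by exists (v, u); rewrite ?inE.
rewrite inE /= => exy E.
have hv : v \in [set x; y] by rewrite -E set21.
have hu : u \in [set x; y] by rewrite -E set22.
have hx : x \in [set v; u] by rewrite E set21.
have hy : y \in [set v; u] by rewrite E set22.
move: hv hu hx hy; rewrite !inE.
case/orP => /eqP -> /orP [] /eqP ->; rewrite ?eqxx ?orbb ?orbT //=.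
- by move=> _ /eqP yx; rewrite yx e_irr in exy.
- by rewrite e_sym.
- by move=> /eqP xy; rewrite xy e_irr in exy.
Qed.

Lemma in_nbhd v u : (u \in nbhd e v) = e v u.
Proof. by rewrite inE. Qed.

Lemma edge_neq u v : e u v -> u != v.
Proof. by apply: contraTneq => ->; rewrite e_irr. Qed.

Lemma deg_le_max v : deg e v <= max_deg e.
Proof. exact: (@leq_bigmax T (deg e)). Qed.

Lemma connect_sub (A : {set T}) x :
  (forall a b, a \in A -> e a b -> b \in A) -> x \in A -> [set y | connect e x y] \subset A.
Proof.
move=> clA xA.
have clA' : closed e A by apply: (intro_closed (sym_connect_sym e_sym)) => a b eab /clA; apply.
by apply/subsetP => y; rewrite inE => /(closed_connect clA') <-.
Qed.

(* The second alternative (q of degree 2, r a leaf) is the one available when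
   col = 2; it bounds no degree at p, but nothing outside constrains q and r. *)
Definition root_triple (K : nat) (p q r : T) : Prop :=
  [/\ p != r, e p q, e q r, deg e q + deg e r <= K &
      deg e p + 2 <= K + e p r \/ nbhd e q \subset [set p; r] /\ nbhd e r \subset [set q]].

Lemma col_num_ok : col_ok e (col_num e).
Proof. by rewrite /col_num; case: ex_minnP. Qed.

Lemma col_num_min j : col_ok e j -> col_num e <= j.
Proof. by rewrite /col_num; case: ex_minnP => m _; apply. Qed.

Lemma col_ok_low j (W : {set T}) : col_ok e j -> W != set0 ->
  exists2 v, v \in W & #|nbhd e v :&: W| < j.
Proof.
move=> /forallP /(_ W) /forallP /(_ [set X in edges e | X \subset W]) /implyP colW W0.
have /existsP [v /andP [vW lt_v]] : [exists v in W,
    #|[set u | [set v; u] \in [set X in edges e | X \subset W]]| < j].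
  apply: colW; rewrite W0 /=; apply/andP; split.
  - by apply/subsetP => X /[!inE] /andP[].
  - by apply/forallP => X; apply/implyP => /[!inE] /andP[].
exists v => //; apply: leq_ltn_trans lt_v; apply: subset_leq_card; apply/subsetP => u.
by rewrite !inE mem_edges subUset !sub1set vW => /andP[-> ->].
Qed.

Lemma col_num_le_max_deg : col_num e <= max_deg e + 1.
Proof.
apply: col_num_min; apply/forallP => S; apply/forallP => F; apply/implyP.
case/and3P => /set0Pn [v vS] sFE _; apply/existsP; exists v; rewrite vS addn1 ltnS.
apply: leq_trans (deg_le_max v); apply: subset_leq_card; apply/subsetP => u.
by rewrite !inE => /(subsetP sFE); rewrite mem_edges.
Qed.

Lemma deg_gt1 q p r : p != r -> e q p -> e q r -> 1 < deg e q.
Proof. by move=> npr eqp eqr; apply/card_gt1P; exists p, r; rewrite !inE. Qed.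

Lemma nbhd_sub1 c b : e c b -> deg e c <= 1 -> nbhd e c \subset [set b].
Proof.
move=> ecb /card_le1_eqP deg_c; apply/subsetP => u cu.
by rewrite inE (deg_c u b) // inE.
Qed.

Lemma nbhdI_setU_l A B v : {in B, forall b, ~~ e v b} ->
  nbhd e v :&: (A :|: B) = nbhd e v :&: A.
Proof.
move=> noB; rewrite setIUr; apply/setUidPl/subsetP => u /setIP [].
by rewrite in_nbhd => evu /noB; rewrite evu.
Qed.

Lemma nbhdI_setU1 x v A :
  nbhd e x :&: (v |: A) = if e x v then v |: (nbhd e x :&: A) else nbhd e x :&: A.
Proof.
apply/setP => w; case exv: (e x v); rewrite !inE;
  by case: (eqVneq w v) => [->|]; rewrite ?exv ?andbF.
Qed.

Lemma sum_nbhdI_set3 (R : nmodType) v p q r (G : T -> R) :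
  p != q -> q != r -> p != r ->
  (\sum_(u in nbhd e v :&: [set p; q; r]) G u = G p *+ e v p + G q *+ e v q + G r *+ e v r)%R.
Proof.
move=> npq nqr npr.
rewrite (eq_bigl (fun u => (u \in [set p; q; r]) && e v u)) => [|u]; last first.
  by rewrite !inE andbC.
by rewrite big_mkcondr big_set3 // !mulrb.
Qed.

Lemma card_nbhdI_set3 v p q r : p != q -> q != r -> p != r ->
  #|nbhd e v :&: [set p; q; r]| = (e v p + e v q + e v r)%N.
Proof. by move=> npq nqr npr; rewrite -sum1_card sum_nbhdI_set3 // !natn. Qed.

Section LargeComponents.
Hypothesis comp_ge3 : forall x : T, 3 <= #|[set y | connect e x y]|.

Lemma exists_nbr x : exists y, e x y.
Proof.
case: (pickP (e x)) => [y exy | nx]; first by exists y.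
have := comp_ge3 x; rewrite leqNgt => /negP []; rewrite ltnS.
apply: leq_trans (subset_leq_card (connect_sub (A := [set x]) _ (set11 x))) _.
- by move=> a b /set1P ->; rewrite nx.
- by rewrite cards1.
Qed.

Lemma exists_nbr_off_edge x y :
  e x y -> exists z, (e x z || e y z) && (z \notin [set x; y]).
Proof.
move=> exy; apply/existsP; apply: contraT; rewrite negb_exists => /forallP no_z.
have := comp_ge3 x; rewrite leqNgt => /negP []; rewrite ltnS.
apply: leq_trans (subset_leq_card (connect_sub (A := [set x; y]) _ (set21 x y))) _.
- move=> a b ab eab; have := no_z b; rewrite negb_and negbK => /orP [] //.
  by case/set2P: ab => <-; rewrite eab ?orbT.
- by rewrite cards2; case: (_ != _).
Qed.

Lemma col_num_gt1 : 0 < #|T| -> 1 < col_num e.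
Proof.
case/card_gt0P => x _; have T0 : [set: T] != set0 by apply/set0Pn; exists x.
have [v _ low_v] := col_ok_low col_num_ok T0; have [u evu] := exists_nbr v.
apply: leq_ltn_trans low_v; apply/card_gt0P.
by exists u; rewrite in_setI in_setT andbT in_nbhd.
Qed.

Variable W : {set T}.
Hypothesis W_closed : forall v u, v \in W -> e v u -> u \in W.

Lemma path3_through c : c \in W ->
  exists p q r, [/\ [set p; q; r] \subset W, p != r, e p q, e q r & c \in [set q; r]].
Proof.
move=> cW; have [b ecb] := exists_nbr c.
have [z /andP [ecbz]] := exists_nbr_off_edge ecb; rewrite !inE negb_or => /andP [zc zb].
have bW := W_closed cW ecb.
case/orP: ecbz => [ecz | ebz].
- exists z, c, b; rewrite e_sym ecz ecb set21; split => //.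
  by rewrite !subUset !sub1set (W_closed cW ecz) cW bW.
- exists z, b, c; rewrite e_sym ebz e_sym ecb set22; split => //.
  by rewrite !subUset !sub1set (W_closed bW ebz) cW bW.
Qed.

Hypothesis W_neq0 : W != set0.

Lemma nbhd_sub_closed v : v \in W -> nbhd e v \subset W.
Proof. by move=> vW; apply/subsetP => u; rewrite in_nbhd; apply: W_closed. Qed.

Lemma root_triple_col_gt2 : 2 < col_num e ->
  exists p q r, [set p; q; r] \subset W /\ root_triple (max_deg e + col_num e - 1) p q r.
Proof.
move=> col_gt2; have [v vW] := col_ok_low col_num_ok W_neq0.
rewrite (setIidPl (nbhd_sub_closed vW)) => deg_v.
have [p [q [r [pqrW npr epq eqr vqr]]]] := path3_through vW.
exists p, q, r; split => //; split => //; last by left; have := deg_le_max p; lia.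
have := deg_le_max q; have := deg_le_max r.
by case/set2P: vqr => <-; rewrite /deg in deg_v *; lia.
Qed.

Lemma root_triple_col2 : col_num e = 2 ->
  exists p q r, [set p; q; r] \subset W /\ root_triple (max_deg e + col_num e - 1) p q r.
Proof.
move=> col2; set L := [set v in W | 1 < deg e v].
have L_neq0 : L != set0.
  have [x xW] := set0Pn _ W_neq0; have [p [q [r [pqrW npr epq eqr _]]]] := path3_through xW.
  apply/set0Pn; exists q; rewrite inE (subsetP pqrW) ?inE ?eqxx ?orbT //=.
  by apply: deg_gt1 npr _ eqr; rewrite e_sym.
have [b /[!inE] /andP [bW deg_b] low_b] := col_ok_low col_num_ok L_neq0.
have leaf c : c \in nbhd e b :\: L ->
    [/\ e b c, c \in W, deg e c <= 1 & nbhd e c \subset [set b]].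
  rewrite !inE => /andP [cL ebc]; have cW := W_closed bW ebc.
  rewrite cW /= -leqNgt in cL; split => //; apply: nbhd_sub1 cL; by rewrite e_sym.
have := cardsID L (nbhd e b); rewrite col2 in low_b.
case: (ltnP 2 (deg e b)) => [deg_b3 | deg_b2] cardb.
- have /card_gt1P [a [c [/leaf[eba aW deg_a _] /leaf[ebc cW deg_c _] nac]]] :
    1 < #|nbhd e b :\: L| by rewrite /deg in deg_b3; lia.
  exists a, b, c; rewrite !subUset !sub1set aW bW cW; split => //.
  split => //; first by rewrite e_sym.
    by have := deg_le_max b; lia.
  by left; have := deg_le_max b; lia.
- have /card_gt0P [c /leaf[ebc cW deg_c nbhd_c]] : 0 < #|nbhd e b :\: L|.
    by rewrite /deg in deg_b; lia.
  have [a /andP [eba nac]] : exists a, e b a && (a != c).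
    have /card_gt1P [x [y [bx b_y nxy]]] := deg_b.
    case: (eqVneq x c) => [xc | nxc]; last by exists x; rewrite -in_nbhd bx.
    by exists y; rewrite -in_nbhd b_y -xc eq_sym.
  have abW := subsetP (nbhd_sub_closed bW).
  exists a, b, c; rewrite !subUset !sub1set bW !abW ?in_nbhd //.
  split => //; split => //; first by rewrite e_sym.
    by have := deg_le_max b; lia.
  right; split => //; suff -> : nbhd e b = [set a; c] by [].
  apply/esym/eqP; rewrite eqEcard cards2 nac -/(deg e b) deg_b2 andbT.
  by apply/subsetP => x /set2P [] ->; rewrite in_nbhd.
Qed.

Lemma exists_root_triple :
  exists p q r, [set p; q; r] \subset W /\ root_triple (max_deg e + col_num e - 1) p q r.
Proof.
have col_gt1 : 1 < col_num e.
  by apply: col_num_gt1; rewrite -cardsT card_gt0 (subset_neq0 _ W_neq0) ?subsetT.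
case: (ltnP 2 (col_num e)) => [|col_le2]; first exact: root_triple_col_gt2.
by apply: root_triple_col2; lia.
Qed.

End LargeComponents.
End Graph.

Section Labelling.
Variables (T : finType) (e : rel T).
Hypotheses (e_sym : symmetric e) (e_irr : irreflexive e).
Local Open Scope ring_scope.
Variable M : finZmodType.
Implicit Types (S A B : {set T}) (c : T -> M) (F : T -> {set M}) (f : {set T} -> M).

Lemma card_shift (Y : {set M}) (s : M) : #|[set t - s | t in Y]| = #|Y|.
Proof. by apply: card_imset; apply: addIr. Qed.

(* Labellings of the edges inside S, those leaving S being labelled already:
   c v is the sum of their labels at v, and F v holds the sums, to be avoided
   by v, of its neighbours outside S. *)
Definition wsum_in (S : {set T}) (c : T -> M) (f : {set T} -> M) (v : T) : M :=
  c v + \sum_(u in nbhd e v :&: S) f [set v; u].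

Definition labelling_in (S : {set T}) (c : T -> M) (F : T -> {set M}) (f : {set T} -> M) :
    Prop :=
  [/\ {in S &, forall u v, e u v -> f [set u; v] != 0},
      {in S, forall v, wsum_in S c f v \notin F v} &
      {in S &, forall u v, e u v -> wsum_in S c f u != wsum_in S c f v}].

Definition slack (S : {set T}) (c : T -> M) (F : T -> {set M}) : Prop :=
  {in S, forall v, #|F v| + #|nbhd e v :&: S| <= deg e v}%N /\
  forall v, F v = set0 -> c v = 0.

Definition labellable (S : {set T}) : Prop :=
  forall c F, slack S c F -> exists f, labelling_in S c F f.

Lemma eq_wsum_in S c c' f f' v : c v = c' v ->
  {in S, forall u, f [set v; u] = f' [set v; u]} -> wsum_in S c f v = wsum_in S c' f' v.
Proof.
move=> cv ff'; rewrite /wsum_in cv; congr (_ + _).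
by apply: eq_bigr => u /setIP [_ /ff'].
Qed.

Lemma eq_labelling_in S c c' F f f' : {in S, c =1 c'} ->
  {in S &, forall u v, f [set u; v] = f' [set u; v]} ->
  labelling_in S c F f -> labelling_in S c' F f'.
Proof.
move=> cc' ff' [f_neq0 f_notin f_proper].
have ws v : v \in S -> wsum_in S c f v = wsum_in S c' f' v.
  by move=> vS; apply: eq_wsum_in (cc' v vS) _ => u; apply: ff'.
split=> [u v uS vS euv | v vS | u v uS vS euv].
- by rewrite -ff' ?f_neq0.
- by rewrite -ws ?f_notin.
- by rewrite -!ws ?f_proper.
Qed.

Lemma labellable0 : labellable set0.
Proof. by move=> c F _; exists (fun _ => 0); split=> [u|v|u]; rewrite inE. Qed.


Lemma labelling_inU A B c F f : {in A & B, forall a b, ~~ e a b} ->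
  labelling_in A c F f -> labelling_in B c F f -> labelling_in (A :|: B) c F f.
Proof.
move=> noAB [fA0 fAF fAp] [fB0 fBF fBp].
have noBA : {in B & A, forall b a, ~~ e b a} by move=> b a bB aA; rewrite e_sym noAB.
have wsA : {in A, forall v, wsum_in (A :|: B) c f v = wsum_in A c f v}.
  by move=> v vA; rewrite /wsum_in nbhdI_setU_l // => b; apply: noAB.
have wsB : {in B, forall v, wsum_in (A :|: B) c f v = wsum_in B c f v}.
  by move=> v vB; rewrite /wsum_in setUC nbhdI_setU_l // => a; apply: noBA.
have same_side u v : u \in A :|: B -> v \in A :|: B -> e u v ->
    (u \in A) && (v \in A) || (u \in B) && (v \in B).
  case/setUP => uX /setUP [] vX euv; rewrite uX vX ?orbT //.
  - by have := noAB u v uX vX; rewrite euv.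
  - by have := noBA u v uX vX; rewrite euv.
split=> [u v uAB vAB euv | v /setUP [] vX | u v uAB vAB euv].
- by case/orP: (same_side u v uAB vAB euv) => /andP [uX vX]; [apply: fA0 | apply: fB0].
- by rewrite wsA ?fAF.
- by rewrite wsB ?fBF.
- case/orP: (same_side u v uAB vAB euv) => /andP [uX vX].
  + by rewrite !wsA ?fAp.
  + by rewrite !wsB ?fBp.
Qed.

Lemma labellableU A B : [disjoint A & B] -> {in A & B, forall a b, ~~ e a b} ->
  labellable A -> labellable B -> labellable (A :|: B).
Proof.
move=> dAB noAB labA labB c F [sl c0].
have noBA : {in B & A, forall b a, ~~ e b a} by move=> b a bB aA; rewrite e_sym noAB.
have [fA lA] : exists fA, labelling_in A c F fA.
  apply: labA; split=> // v vA; rewrite -(@nbhdI_setU_l _ _ A B) ?sl ?inE ?vA //.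
  by move=> b; apply: noAB.
have [fB lB] : exists fB, labelling_in B c F fB.
  apply: labB; split=> // v vB; rewrite -(@nbhdI_setU_l _ _ B A) 1?setUC ?sl ?inE ?vB ?orbT //.
  by move=> a; apply: noBA.
exists (fun X : {set T} => if X \subset A then fA X else fB X); apply: labelling_inU => //.
- by apply: eq_labelling_in lA => // u v uA vA; rewrite subUset !sub1set uA vA.
- apply: eq_labelling_in lB => // u v uB vB; rewrite subUset sub1set.
  by rewrite (disjointFl dAB uB).
Qed.


Lemma slack_setU1 A v c F (g : T -> M) (s : M) :
  v \notin A -> slack (v |: A) c F ->
  slack A (fun x => c x + (if e x v then g x else 0))
          (fun x => if e x v then s |: F x else F x).
Proof.
move=> vA [sl c0]; split=> [x xA | x].
- have := sl x (setU1r v xA); rewrite nbhdI_setU1; case: (e x v) => //.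
  rewrite !cardsU1 inE (negbTE vA) andbF /=; case: (s \notin F x) => /=; lia.
- case: (e x v) => [/setP /(_ s) | /c0 ->]; last by rewrite addr0.
  by rewrite !inE eqxx.
Qed.

Lemma labelling_in_setU1 A v c F f : v \notin A ->
  labelling_in A (fun x => c x + (if e x v then f [set x; v] else 0))
    (fun x => if e x v then wsum_in (v |: A) c f v |: F x else F x) f ->
  {in A, forall w, e v w -> f [set v; w] != 0} ->
  wsum_in (v |: A) c f v \notin F v ->
  labelling_in (v |: A) c F f.
Proof.
move=> vA [fA0 fAF fAp] fv0 svF.
set sv := wsum_in (v |: A) c f v.
have ws x : x \in A -> wsum_in (v |: A) c f x =
    wsum_in A (fun x => c x + (if e x v then f [set x; v] else 0)) f x.
  move=> xA; rewrite /wsum_in nbhdI_setU1; case: (e x v); last by rewrite addr0.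
  by rewrite big_setU1 ?addrA // inE (negbTE vA) andbF.
have neq_sv x : x \in A -> e x v -> wsum_in (v |: A) c f x != sv.
  by move=> xA exv; rewrite ws //; apply: contraNneq (fAF x xA) => ->; rewrite exv setU11.
split=> [x w | x | x w].
- move=> /setU1P [-> | xA] /setU1P [-> | wA] exw; rewrite ?e_irr // in exw.
  + exact: fv0.
  + by rewrite setUC fv0 // e_sym.
  + exact: fA0.
- case/setU1P => [-> // | xA]; rewrite ws //; have := fAF x xA.
  by case: (e x v) => //; rewrite in_setU1 negb_or => /andP [].
- move=> /setU1P [-> | xA] /setU1P [-> | wA] exw; rewrite ?e_irr // in exw.
  + by rewrite eq_sym neq_sv // e_sym.
  + exact: neq_sv.
  + by rewrite !ws ?fAp.
Qed.



Lemma labelling_in_triple p q r c F (a y x : M) : p != r -> e p q -> e q r ->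
  let z := a *+ e p r in
  [&& a != 0, y != 0 & x != 0] ->
  y \notin [set t - (c p + z) | t in F p] -> y != c r + z - c q ->
  x \notin [set t - (y + c q) | t in F q] -> x \notin [set t - (c r + z) | t in F r] ->
  x != y + (c p + z) - (y + c q) -> (e p r -> x != y + (c p + z) - (c r + z)) ->
  labelling_in [set p; q; r] c F
    (fun X => if p \in X then (if q \in X then y else a) else x).
Proof.
move=> npr epq eqr z /and3P [a0 y0 x0] yFp yqr xFq xFr xpq xpr; set f := fun X => _.
have npq := edge_neq e_irr epq; have nqr := edge_neq e_irr eqr.
have [nqp nrq nrp] : [/\ q != p, r != q & r != p] by split; rewrite eq_sym.
have sp : wsum_in [set p; q; r] c f p = y + (c p + z).
  rewrite /wsum_in sum_nbhdI_set3 // e_irr epq /f !inE !eqxx (negbTE nqp) (negbTE nqr) /=.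
  by rewrite mulr0n mulr1n add0r addrCA.
have sq : wsum_in [set p; q; r] c f q = x + (y + c q).
  rewrite /wsum_in sum_nbhdI_set3 // e_irr eqr e_sym epq /f !inE !eqxx.
  rewrite (negbTE npq) (negbTE npr) /=.
  by rewrite mulr0n !mulr1n addr0 addrC [y + x]addrC addrA.
have sr : wsum_in [set p; q; r] c f r = x + (c r + z).
  rewrite /wsum_in sum_nbhdI_set3 // e_irr (e_sym r q) eqr (e_sym r p) /f !inE !eqxx.
  rewrite (negbTE nqr) (negbTE nqp) (negbTE npr) (negbTE npq) /=.
  by rewrite mulr0n mulr1n addr0 addrA addrC.
have pq : y + (c p + z) != x + (y + c q) by rewrite eq_sym shift_neq.
have qr : x + (y + c q) != x + (c r + z) by rewrite (inj_eq (addrI x)) shift_neq.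
have pr : e p r -> y + (c p + z) != x + (c r + z) by move=> epr; rewrite eq_sym shift_neq ?xpr.
split=> [u v _ _ _ | v | u v].
- by rewrite /f; case: ifP => _; [case: ifP|].
- by rewrite !inE => /orP [/orP []|] /eqP ->; rewrite ?sp ?sq ?sr shift_notin.
- rewrite !inE => /orP [/orP []|] /eqP -> /orP [/orP []|] /eqP -> euv;
    rewrite ?e_irr // in euv; rewrite ?sp ?sq ?sr.
  + exact: pq.
  + exact: pr.
  + by rewrite eq_sym.
  + exact: qr.
  + by rewrite eq_sym pr // e_sym.
  + by rewrite eq_sym.
Qed.

Variable k : nat.
Hypotheses (card_M : #|M| = k) (max_deg_lt : (max_deg e < k)%N).

Lemma exists_notin (Y : {set M}) : (#|Y| < k)%N -> exists y, y \notin Y.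
Proof.
move=> ltY; have /card_gt0P [y] : (0 < #|~: Y|)%N.
  by rewrite -(ltn_add2l #|Y|) addn0 cardsC card_M.
by rewrite inE; exists y.
Qed.

Lemma labellableU1 A v u : labellable A -> v \notin A -> u \in A -> e v u ->
  labellable (v |: A).
Proof.
move=> labA vA uA evu c F [sl c0].
have Fv_lt : (#|F v|.+1 < k)%N.
  have : (0 < #|nbhd e v :&: (v |: A)|)%N.
    by apply/card_gt0P; exists u; rewrite !inE evu uA orbT.
  by have := sl v (setU11 v A); have := deg_le_max e v; lia.
have [a] : exists a : M, a \notin [set 0].
  by apply: exists_notin; rewrite cards1 (leq_ltn_trans _ Fv_lt).
rewrite inE => a0.
pose sigma := c v + \sum_(w in nbhd e v :&: A :\ u) a.
have [y] : exists y, y \notin 0 |: [set t - sigma | t in F v].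
  apply: exists_notin; apply: leq_ltn_trans Fv_lt.
  by rewrite cardsU1 -add1n leq_add ?leq_b1 ?leq_imset_card.
rewrite in_setU1 negb_or => /andP [y0 yF].
pose g w := if w == u then y else a.
have [fA lA] := labA _ _ (slack_setU1 g (y + sigma) vA (conj sl c0)).
pose f (X : {set T}) := if v \in X then (if u \in X then y else a) else fA X.
have fvw w : f [set v; w] = g w.
  by rewrite /f set21 !inE [u == v]eq_sym (negbTE (edge_neq e_irr evu)) [u == w]eq_sym.
have sv : wsum_in (v |: A) c f v = y + sigma.
  rewrite /wsum_in nbhdI_setU1 e_irr (eq_bigr g) // (big_setD1 u) ?inE ?evu ?uA //.
  rewrite /g eqxx addrCA; congr (_ + (_ + _)).
  by apply: eq_bigr => w /setD1P [/negbTE ->].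
exists f; apply: labelling_in_setU1 => //.
- rewrite sv; apply: eq_labelling_in lA => [x xA | x w xA wA]; first by rewrite setUC fvw.
  have vxw : v \notin [set x; w].
    by rewrite !inE; apply/norP; split; apply: contraNneq vA => ->.
  by rewrite /f (negbTE vxw).
- by move=> w _ _; rewrite fvw /g; case: ifP.
- by rewrite sv; apply: shift_notin.
Qed.

Lemma triple_budget p q r c F : root_triple e k p q r -> slack [set p; q; r] c F ->
  (#|F q| + #|F r| + e p r + 3 <= k)%N /\
  ((#|F p| + 3 <= k)%N \/ [/\ e p r = false, c q = c r & (#|F p| + 2 <= k)%N]).
Proof.
case=> npr epq eqr deg_qr alt [sl c0].
have npq := edge_neq e_irr epq; have nqr := edge_neq e_irr eqr.
have Fv u : u \in [set p; q; r] -> (#|F u| + (e u p + e u q + e u r) <= deg e u)%N.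
  by move=> uS; rewrite -card_nbhdI_set3 ?sl.
have Fp : (#|F p| + (1 + e p r) <= deg e p)%N.
  by have := Fv p; rewrite e_irr epq; apply; rewrite !inE eqxx.
have Fq : (#|F q| + 2 <= deg e q)%N.
  by have := Fv q; rewrite e_sym epq e_irr eqr; apply; rewrite !inE eqxx orbT.
have Fr : (#|F r| + (e p r + 1) <= deg e r)%N.
  have := Fv r; rewrite (e_sym r p) (e_sym r q) eqr e_irr addn0.
  by apply; rewrite !inE eqxx orbT.
have := deg_le_max e p; split; first by lia.
case: alt => [deg_p | [Nq Nr]]; [left; lia | right].
have dq : (deg e q <= 2)%N by rewrite /deg (leq_trans (subset_leq_card Nq)) // cards2 npr.
have dr : (deg e r <= 1)%N by rewrite /deg (leq_trans (subset_leq_card Nr)) // cards1.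
have epr : e p r = false by move: Fr; case: (e p r) => //=; lia.
split => //; last by lia.
by rewrite !c0 //; apply: cards0_eq; lia.
Qed.

Lemma labellable_triple p q r : root_triple e k p q r -> labellable [set p; q; r].
Proof.
move=> pqr c F slF; have [budget_x budget_y] := triple_budget pqr slF.
case: pqr => npr epq eqr _ _.
have [a] : exists a : M, a \notin [set 0] by apply: exists_notin; rewrite cards1; lia.
rewrite inE => a0; pose z := a *+ e p r.
have [y] : exists y, y \notin [set 0; c r + z - c q] :|: [set t - (c p + z) | t in F p].
  apply: exists_notin; apply: leq_ltn_trans (leq_card_setU _ _) _; rewrite card_shift cards2.
  case: budget_y => [| [epr cqr]]; first by case: (_ != _) => /=; lia.
  by rewrite /z epr cqr mulr0n addr0 subrr eqxx /=; lia.
rewrite !inE !negb_or => /andP [/andP [y0 yqr] yFp].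
have [x] : exists x, x \notin [set 0; y + (c p + z) - (y + c q)] :|:
    [set t - (y + c q) | t in F q] :|: [set t - (c r + z) | t in F r] :|:
    (if e p r then [set y + (c p + z) - (c r + z)] else set0).
  apply: exists_notin; apply: leq_ltn_trans (leq_card_setU4 _ _ _ _) _.
  rewrite !card_shift cards2.
  by case: (e p r) budget_x; rewrite ?cards1 ?cards0; case: (_ != _) => /=; lia.
rewrite !inE !negb_or => /andP [/andP [/andP [/andP [x0 xpq] xFq] xFr] xpr].
exists (fun X : {set T} => if p \in X then (if q \in X then y else a) else x).
apply: labelling_in_triple => //; first by rewrite a0 y0 x0.
by move=> epr; rewrite epr inE in xpr.
Qed.

End Labelling.

Section ColouringBound.
Variables (T : finType) (e : rel T).
Hypotheses (e_sym : symmetric e) (e_irr : irreflexive e).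
Hypothesis comp_ge3 : forall x : T, 3 <= #|[set y | connect e x y]|.
Hypothesis T_nonempty : 0 < #|T|.

Lemma labellable_grow (M : finZmodType) S : #|M| = max_deg e + col_num e - 1 ->
  labellable e M S -> S != setT -> exists2 S', labellable e M S' & S \proper S'.
Proof.
move=> card_M labS neqS.
have max_deg_lt : max_deg e < max_deg e + col_num e - 1.
  by have := col_num_gt1 e_sym e_irr comp_ge3 T_nonempty; lia.
case: (pickP [pred v | (v \notin S) && [exists u in S, e v u]]) => [v | S_closed].
  case/andP => vS /existsP [u /andP [uS evu]]; exists (v |: S).
    exact (labellableU1 e_sym e_irr card_M max_deg_lt labS vS uS evu).
  by rewrite properUr // sub1set.
have W_closed v u : v \in ~: S -> e v u -> u \in ~: S.
  rewrite !inE => vS evu; apply/negP => uS; have := S_closed v; rewrite /= vS /=.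
  by move/negbT/existsPn/(_ u); rewrite uS evu.
have [p [q [r [pqrW pqr]]]] :=
  exists_root_triple e_sym e_irr comp_ge3 W_closed (setC_neq0 neqS).
have pW : p \in ~: S by rewrite (subsetP pqrW) // !inE eqxx.
exists (S :|: [set p; q; r]).
  apply: labellableU => //; first by rewrite disjoint_sym disjoints_subset.
  - move=> a b aS /(subsetP pqrW) bW; apply/negP => eab.
    by have := W_closed b a bW; rewrite e_sym eab inE aS => /(_ isT).
  - exact (labellable_triple e_sym e_irr card_M max_deg_lt pqr).
rewrite properUl //; apply: contraTN pW => /subsetP /(_ p).
by rewrite !inE eqxx => /(_ isT) ->.
Qed.

Lemma nz_gsum_ok_bound : nz_gsum_ok e (max_deg e + col_num e - 1).
Proof.
move=> M; rewrite cardsT => card_M.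
have labT := setT_by_growth (@labellable0 _ e M) (fun S => @labellable_grow M S card_M).
have slT : slack e setT (fun _ => 0%R : M) (fun _ => set0).
  by split=> // v _; rewrite cards0 setIT.
have [f [f_neq0 _ f_proper]] := labT _ _ slT.
have ws v : wsum e f v = wsum_in e setT (fun _ => 0%R) f v by rewrite /wsum_in add0r setIT.
exists f; split=> [X /imsetP [[u v]] /[!inE] /= euv -> | u v euv].
- exact: f_neq0.
- by rewrite !ws f_proper.
Qed.

End ColouringBound.

Theorem corollary2 (T : finType) (e : rel T)
  (e_sym : symmetric e) (e_irr : irreflexive e)
  (T_nonempty : 0 < #|T|)
  (comp_ge3 : forall x : T, 3 <= #|[set y | connect e x y]|) :
  (exists k, is_nz_gsum_chi e k /\ k <= max_deg e + col_num e - 1) /\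
  max_deg e + col_num e - 1 <= 2 * max_deg e.
Proof.
have col_gt1 := col_num_gt1 e_sym e_irr comp_ge3 T_nonempty.
have col_le := col_num_le_max_deg e_sym e_irr.
split; last by lia.
have K_gt0 : 0 < max_deg e + col_num e - 1 by lia.
have ok_K := nz_gsum_ok_bound e_sym e_irr comp_ge3 T_nonempty.
have [m [m_gt0 ok_m] min_m] :=
  ex_minimal_nat (P := fun j => 0 < j /\ nz_gsum_ok e j) (conj K_gt0 ok_K).
exists m; split; last exact: min_m (conj K_gt0 ok_K).
do 2!split=> //; move=> j j_gt0 lt_jm ok_j.
by have := min_m j (conj j_gt0 ok_j); rewrite leqNgt lt_jm.
Qed.
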